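(* For every integer $n\ge1$, $$F_{2n-2}=\sum_{(a_1,\dots,a_k)\in C(n)}(2^{a_1-1}-1)(2^{a_2-1}-1)\cdots(2^{a_k-1}-1).$$
   Context: $C(n)$ is the set of all compositions $(a_1,\dots,a_k)$ of $n$ (sequences of positive integers with sum $n$, any number of parts). Fibonacci numbers: $F_0=0$, $F_1=1$, $F_n=F_{n-1}+F_{n-2}$. *)

From mathcomp Require Import all_boot all_order all_algebra.
Set Implicit Arguments. Unset Strict Implicit. Unset Printing Implicit Defensive.

Fixpoint fib (n : nat) : nat :=
  match n with
  | 0 => 0
  | 1 => 1
  | (m.+1 as p).+1 => fib p + fib m
  end.

Definition is_composition (n : nat) (s : seq nat) : bool :=
  all (fun a => 0 < a) s && (sumn s == n).

Definition comp_weight (s : seq nat) : int :=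
  \prod_(a <- s) ((2 ^ a.-1)%:Z - 1)%R.

(* Every composition of n has k <= n parts, each part <= n,
   so C(n) is exactly the set of sequences of length k < n.+1 with entries in
   'I_n.+1 satisfying is_composition n; distinct (k, tuple) give distinct seqs. *)
Definition comp_sum (n : nat) : int :=
  \sum_(k < n.+1) \sum_(t : k.-tuple 'I_n.+1 |
        is_composition n (map (@nat_of_ord _) t)) comp_weight (map (@nat_of_ord _) t).

From mathcomp Require Import all_boot all_order all_algebra.
From mathcomp Require Import ring zify.
Set Implicit Arguments. Unset Strict Implicit. Unset Printing Implicit Defensive.
Import GRing.Theory.

(* Every composition of m+1 is obtained from a composition s
   of m in exactly one of two ways: prepend a part 1, or (when s is nonempty)
   increase its first part by one.
   A leading part 1 contributes the factor 2^0 - 1 = 0, and increasing a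
   first part a turns 2^(a-1) - 1 into 2(2^(a-1) - 1) + 1.  Hence, with
     A m = sum of the weights of the nonempty compositions of m,
     B m = sum over the same compositions of the weight of their tail,
   we get A (m+1) = 2 A m + B m and B (m+1) = (total weight of C(m)) + B m,
   and the total weight of C(m+1) equals A (m+1).  Induction then shows
   A (m+1) = F_{2m} and B (m+1) = F_{2m+1} - F_{2m}, which is the theorem. *)

Definition bump_head (s : seq nat) : seq nat :=
  if s is a :: t then a.+1 :: t else [::].

Fixpoint compositions (m : nat) : seq (seq nat) :=
  if m is m'.+1 then
    [seq 1 :: s | s <- compositions m'] ++
    [seq bump_head s | s <- compositions m' & s != [::]]
  else [:: [::]].

Lemma compositionsS m : compositions m.+1 =
  [seq 1 :: s | s <- compositions m] ++
  [seq bump_head s | s <- compositions m & s != [::]].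
Proof. by []. Qed.

Lemma mem_compositions m s : (s \in compositions m) = is_composition m s.
Proof.
elim: m s => [|m IH] s.
  case: s => [|a t] //=; rewrite /is_composition /= inE /=.
  by apply/esym/negbTE; rewrite negb_and; case: a => //= a; rewrite orbT.
rewrite compositionsS mem_cat; apply/idP/idP.
  case/orP=> /mapP [[|a t] Ht ->]; move: Ht; rewrite ?mem_filter ?IH //=.
  by rewrite /is_composition /= => /andP [/andP [_ Ht] Hs]; rewrite Ht addSn.
case: s => [|[|[|a]] t]; rewrite /is_composition //= => /andP [Ht /eqP Hs].
  by rewrite map_f // IH /is_composition Ht; apply/eqP; lia.
apply/orP; right; apply/mapP; exists (a.+1 :: t) => //.
by rewrite mem_filter IH /is_composition /= Ht; apply/eqP; lia.
Qed.

Lemma uniq_compositions m : uniq (compositions m).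
Proof.
elim: m => [|m IH] //; rewrite compositionsS cat_uniq; apply/and3P; split.
- by rewrite map_inj_uniq // => x y [].
- apply/hasPn => s /mapP [[|a t]]; rewrite mem_filter //= => Ht ->.
  apply/mapP => -[u _ [a0 _]]; move: Ht.
  by rewrite mem_compositions /is_composition a0.
- rewrite map_inj_in_uniq ?filter_uniq // => -[|a x] [|b y];
  by rewrite ?mem_filter //= => _ _ [-> ->].
Qed.

Lemma size_le_sumn s : all (fun a => 0 < a) s -> size s <= sumn s.
Proof. by elim: s => [|a s IH] //= /andP [Ha /IH]; lia. Qed.

Lemma part_le_sumn s a : a \in s -> a <= sumn s.
Proof. by elim: s => [|b s IH] //=; rewrite inE => /orP [/eqP -> | /IH]; lia. Qed.

Local Open Scope ring_scope.

Section Reindexing.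

Variables (R : nmodType) (F : seq nat -> R).

Lemma tuple_sum_compositions n k :
  \sum_(t : k.-tuple 'I_n.+1 | is_composition n (map (@nat_of_ord _) t))
     F (map (@nat_of_ord _) t)
  = \sum_(s <- compositions n | size s == k) F s.
Proof.
transitivity (\sum_(s <- [seq map (@nat_of_ord _) (tval t) |
                            t <- enum {: k.-tuple 'I_n.+1}] |
                     is_composition n s) F s).
  by rewrite big_map big_enum_cond.
rewrite -big_filter -[RHS]big_filter.
apply/perm_big/uniq_perm; rewrite ?filter_uniq ?uniq_compositions //.
  by rewrite map_inj_uniq ?enum_uniq // => t1 t2 /(inj_map val_inj)/val_inj.
move=> s; rewrite !mem_filter mem_compositions; apply/idP/idP.
  case/andP=> Hs /mapP [t _ Ets]; rewrite Hs andbT Ets.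
  by rewrite size_map size_tuple.
case/andP=> /eqP Hk Hs; rewrite Hs /=.
have Hsz : size (map (@inord n) s) == k by rewrite size_map Hk.
apply/mapP; exists (Tuple Hsz); rewrite ?mem_enum //= -map_comp map_id_in //.
move=> a Ha; rewrite /= inordK // ltnS.
by case/andP: Hs => _ /eqP <-; apply: part_le_sumn.
Qed.

Lemma bounded_sum_compositions n :
  \sum_(k < n.+1) \sum_(t : k.-tuple 'I_n.+1 |
        is_composition n (map (@nat_of_ord _) t)) F (map (@nat_of_ord _) t)
  = \sum_(s <- compositions n) F s.
Proof.
under eq_bigr => k _ do rewrite tuple_sum_compositions big_mkcond.
rewrite exchange_big big_seq [RHS]big_seq; apply: eq_bigr => s Hs /=.
have Hsz : (size s < n.+1)%N.
  move: Hs; rewrite mem_compositions /is_composition => /andP [Hp /eqP <-].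
  by rewrite ltnS size_le_sumn.
rewrite (bigD1 (Ordinal Hsz)) //= eqxx big1 ?addr0 // => i /eqP Hi.
by case: eqP => // Ei; case: Hi; apply: val_inj; rewrite /= Ei.
Qed.

End Reindexing.

Definition total_weight m : int := \sum_(s <- compositions m) comp_weight s.
Definition head_weight m : int :=
  \sum_(s <- compositions m | s != [::]) comp_weight s.
Definition tail_weight m : int :=
  \sum_(s <- compositions m | s != [::]) comp_weight (behead s).

Lemma comp_weight_cons a s :
  comp_weight (a :: s) = ((2 ^ a.-1)%:Z - 1) * comp_weight s.
Proof. by rewrite /comp_weight big_cons. Qed.

Lemma sum_weight_lead1 (C : seq (seq nat)) (P : pred (seq nat)) :
  \sum_(s <- [seq 1 :: s | s <- C] | P s) comp_weight s = 0.
Proof. by rewrite big_map big1 // => s _; rewrite comp_weight_cons subrr mul0r. Qed.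

(* Increasing the first part a > 0: 2^a - 1 = 2 (2^(a-1) - 1) + 1. *)
Lemma comp_weight_bump_head (a : nat) (t : seq nat) : (0 < a)%N ->
  comp_weight (bump_head (a :: t)) = 2 * comp_weight (a :: t) + comp_weight t.
Proof.
by case: a => // a _; rewrite /= !comp_weight_cons /= expnS PoszM; ring.
Qed.

Lemma total_weightS m : total_weight m.+1 = head_weight m.+1.
Proof.
rewrite /total_weight /head_weight compositionsS !big_cat /= !big_map.
by rewrite big_filter big_filter_cond; congr (_ + _); apply: eq_bigl => -[].
Qed.

Lemma head_weightS m : head_weight m.+1 = 2 * head_weight m + tail_weight m.
Proof.
rewrite /head_weight /tail_weight compositionsS big_cat /= sum_weight_lead1.
rewrite add0r big_map big_filter_cond mulr_sumr -big_split /=.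
rewrite big_seq_cond [RHS]big_seq_cond; apply: eq_big => [[]|[|a t]] //.
  by case/and3P.
rewrite mem_compositions => /and3P [/andP [/andP [Ha _] _] _ _].
exact: comp_weight_bump_head.
Qed.

Lemma tail_weightS m : tail_weight m.+1 = total_weight m + tail_weight m.
Proof.
rewrite /tail_weight /total_weight compositionsS big_cat /= !big_map.
by rewrite big_filter_cond; congr (_ + _); apply: eq_big => -[].
Qed.

Lemma weights_fib m :
  head_weight m.+1 = (fib (2 * m))%:Z /\
  tail_weight m.+1 = (fib (2 * m).+1)%:Z - (fib (2 * m))%:Z.
Proof.
elim: m => [|m [IHh IHt]]; first by rewrite /head_weight /tail_weight /=
  !big_cons !big_nil /comp_weight /= !big_cons !big_nil.
rewrite (head_weightS m.+1) (tail_weightS m.+1) total_weightS IHh IHt.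
have -> : (2 * m.+1 = (2 * m).+2)%N by lia.
by rewrite /= !PoszD; split; ring.
Qed.

Local Close Scope ring_scope.

Theorem mainTheorem12 (n : nat) (hn : 1 <= n) :
  Posz (fib (2 * n - 2)) = comp_sum n.
Proof.
case: n hn => [|m] // _.
rewrite /comp_sum bounded_sum_compositions -/(total_weight _) total_weightS.
by rewrite (weights_fib m).1; congr (Posz (fib _)); lia.
Qed.
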